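(* Let $a,b,c$ be positive numbers with $a<b<c$, $\lfloor c/b\rfloor\ge2$, $b-a<c_0<a$ and $0\le c_1\le2a-b$, where $c_0=c-\lfloor c/b\rfloor b$ and $c_1=c-c_0-\lfloor(c-c_0)/a\rfloor a$. Suppose $\mathcal S_{a,b,c}\ne\emptyset$ and either $a/b\notin\mathbb Q$, or $a/b=p/q$ and $c\in(b/q)\mathbb Z$ for some coprime positive integers $p,q$. Then for every $t\in\mathcal S_{a,b,c}$, $$Y_{a,b,c}(R_{a,b,c}(t))-Y_{a,b,c}(t)-Y_{a,b,c}(c_1+b-a)\in Y_{a,b,c}(a)\mathbb Z.$$
   Context: For $a,b,c>0$ and $t\in\mathbb R$, $\mathbf M_{a,b,c}(t)=(\chi_{[0,c)}(t-\mu+\lambda))_{\mu\in a\mathbb Z,\lambda\in b\mathbb Z}$ is the infinite matrix with rows indexed by $a\mathbb Z$ and columns by $b\mathbb Z$, acting by $(\mathbf M_{a,b,c}(t)\mathbf x)(\mu)=\sum_{\lambda\in b\mathbb Z}\chi_{[0,c)}(t-\mu+\lambda)\mathbf x(\lambda)$. $\mathcal B_b^0$ is the set of vectors $(\mathbf x(\lambda))_{\lambda\in b\mathbb Z}$ with entries in $\{0,1\}$ and $\mathbf x(0)=1$. $\mathbf 1$ denotes the vector indexed by $a\mathbb Z$ with all entries $1$. $\mathcal S_{a,b,c}=\{t:\mathbf M_{a,b,c}(t)\mathbf x=\mathbf 1\text{ for some }\mathbf x\in\mathcal B_b^0\}$. $R_{a,b,c}(t)=t+\lfloor c/b\rfloor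 b+b$ if $t\in[0,c_0+a-b)+a\mathbb Z$, $R_{a,b,c}(t)=t$ if $t\in[c_0+a-b,c_0)+a\mathbb Z$, $R_{a,b,c}(t)=t+\lfloor c/b\rfloor b$ if $t\in[c_0,a)+a\mathbb Z$. The holes-removal map is $Y_{a,b,c}(t)=\operatorname{sgn}(t)\,|[\min(0,t),\max(0,t))\cap\mathcal S_{a,b,c}|$ with $|\cdot|$ Lebesgue measure. $A+a\mathbb Z=\{x+ak:x\in A,k\in\mathbb Z\}$. *)

From Stdlib Require Import Reals ZArith ClassicalEpsilon.
Open Scope R_scope.

(* floor function: Int_part r = up r - 1 = floor r *)
Definition floorR (x : R) : R := IZR (Int_part x).

Definition chi0c (c x : R) : R :=
  if Rle_dec 0 x then (if Rlt_dec x c then 1 else 0) else 0.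

(* B_b^0 : vectors indexed by bZ (index k <-> lambda = b k) with 0/1 entries and x(0)=1 *)
Definition in_B0 (x : Z -> bool) : Prop := x 0%Z = true.

(* (M_{a,b,c}(t) x)(mu) = 1 for mu = a m.  Since all entries are 0/1 the
   (finitely supported) row sum sum_k chi_[0,c)(t - a m + b k) x(k) equals 1
   iff exactly one index k has x k = true and chi = 1. *)
Definition row_sum_is_one (a b c t : R) (x : Z -> bool) (m : Z) : Prop :=
  exists! k : Z, x k = true /\ chi0c c (t - a * IZR m + b * IZR k) = 1.

Definition Mx_eq_1 (a b c t : R) (x : Z -> bool) : Prop :=
  forall m : Z, row_sum_is_one a b c t x m.

Definition S_abc (a b c : R) (t : R) : Prop :=
  exists x : Z -> bool, in_B0 x /\ Mx_eq_1 a b c t x.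

Definition c0_of (b c : R) : R := c - floorR (c / b) * b.
Definition c1_of (a b c : R) : R :=
  c - c0_of b c - floorR ((c - c0_of b c) / a) * a.

Definition mod_a (a t : R) : R := t - a * floorR (t / a).

Definition R_abc (a b c t : R) : R :=
  let c0 := c0_of b c in
  let s := mod_a a t in
  if Rlt_dec s (c0 + a - b) then t + floorR (c / b) * b + b
  else if Rlt_dec s c0 then t
  else t + floorR (c / b) * b.

(* Lebesgue (outer) measure, for sets of finite measure:
   infimum of total lengths of countable covers by intervals [l_n, r_n). *)
Definition cover_length (A : R -> Prop) (L : R) : Prop :=
  exists l r : nat -> R,
    (forall n, l n <= r n) /\
    infinite_sum (fun n => r n - l n) L /\
    (forall x, A x -> exists n, l n <= x < r n).

Definition is_glb (E : R -> Prop) (m : R) : Prop :=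
  (forall y, E y -> m <= y) /\ (forall m', (forall y, E y -> m' <= y) -> m' <= m).

Definition leb_measure (A : R -> Prop) : R :=
  epsilon (inhabits 0) (fun m => is_glb (cover_length A) m).

Definition sgn (t : R) : R :=
  if Rlt_dec 0 t then 1 else if Rlt_dec t 0 then -1 else 0.

Definition Y_abc (a b c t : R) : R :=
  sgn t * leb_measure (fun x => Rmin 0 t <= x < Rmax 0 t /\ S_abc a b c x).

From Pilot Require Import Defs.
From Stdlib Require Import Reals ZArith Lra Lia Psatz.
From Stdlib Require Import Classical FunctionalExtensionality PropExtensionality ClassicalEpsilon.
Open Scope R_scope.

(** 1. Outer measure.  [meas_on P x y] is the outer measure of [P] on the
       window [[x, y)]; it is translation invariant and additive over
       adjacent windows (covers are cut, resp. interleaved).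
    2. The set [S].  [S] is [a]-periodic, and re-indexing a solution of
       [M(t) x = 1] at a selected column gives solutions at [t + b k].
       Using this, [R] maps [S] onto [S], and [t mod a] never lies in the
       hole [[c0 + a - b, c0)] for [t] in [S].
    3. The map [Y].  [Y y - Y x] is the measure of [S] on [[x, y)], so
       [Y (x + a j) = Y x + j Y a], and [Y] increments equally on windows
       whose traces of [S] are translates of each other.
    4. Since [floor (c / b) b = c1 + a N], [R] translates [[0, c0 + a - b)]
       by [c1 + b] and [[c0, a)] by [c1] (modulo [a]), these translations
       preserve [S], and [[c1, c1 + b - a)] misses [S].  Comparing the
       windows gives the increment [Y (c1 + b - a) + (N + 1) Y a] on the
       low branch and [Y (c1 + b - a) + N Y a] on the high branch. *)

Definition meas_on (P : R -> Prop) (x y : R) : R :=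
  leb_measure (fun u => x <= u < y /\ P u).

Lemma nonneg_series_bounded (f : nat -> R) (M : R) :
  (forall n, 0 <= f n) -> (forall n, sum_f_R0 f n <= M) ->
  exists L, infinite_sum f L /\ L <= M.
Proof.
  intros Hf HM.
  assert (Hgrow : Un_growing (fun n => sum_f_R0 f n)).
  { intro n; simpl; specialize (Hf (S n)); lra. }
  destruct (growing_cv _ Hgrow) as [L HL]; [exists M; intros y [n ->]; apply HM|].
  exists L; split; [exact HL|].
  apply (Rle_cv_lim (Un := fun n => sum_f_R0 f n) (Vn := fun _ => M)); [exact HM|exact HL|].
  intros eps He; exists 0%nat; intros n _; unfold R_dist.
  replace (M - M) with 0 by ring; rewrite Rabs_R0; lra.
Qed.

Lemma cover_length_nonneg (A : R -> Prop) (L : R) : cover_length A L -> 0 <= L.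
Proof.
  intros (l & r & Hlr & Hs & _).
  assert (Hpos : forall n, 0 <= r n - l n) by (intro n; specialize (Hlr n); lra).
  pose proof (sum_incr _ 0 L Hs Hpos) as H; simpl in H; specialize (Hpos 0%nat); lra.
Qed.

Lemma cover_length_interval (A : R -> Prop) (x y : R) :
  x <= y -> (forall u, A u -> x <= u < y) -> cover_length A (y - x).
Proof.
  intros Hxy HA.
  exists (fun _ => x), (fun n => match n with O => y | _ => x end).
  split; [intros [|n]; lra|]; split.
  - assert (E : forall n, sum_f_R0 (fun n => (match n with O => y | _ => x end) - x) n = y - x).
    { induction n; simpl; [lra|rewrite IHn; lra]. }
    intros eps He; exists 0%nat; intros n _; unfold R_dist.
    rewrite E; replace (y - x - (y - x)) with 0 by ring; rewrite Rabs_R0; exact He.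
  - intros u Hu; exists 0%nat; apply HA in Hu; lra.
Qed.

Lemma cover_length_mono (A B : R -> Prop) (L : R) :
  (forall u, A u -> B u) -> cover_length B L -> cover_length A L.
Proof.
  intros HAB (l & r & Hlr & Hs & Hc); exists l, r; split; [exact Hlr|split; [exact Hs|]].
  intros u Hu; exact (Hc u (HAB u Hu)).
Qed.

Lemma cover_length_translate (A : R -> Prop) (h L : R) :
  cover_length A L -> cover_length (fun u => A (u - h)) L.
Proof.
  intros (l & r & Hlr & Hs & Hc).
  exists (fun n => l n + h), (fun n => r n + h).
  split; [intro n; specialize (Hlr n); lra|]; split.
  - replace (fun n => r n + h - (l n + h)) with (fun n => r n - l n); [exact Hs|].
    apply functional_extensionality; intro n; ring.
  - intros u Hu; destruct (Hc _ Hu) as [n Hn]; exists n; lra.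
Qed.

(** Cutting every interval of a cover at [y] splits it into a cover of the
    part left of [y] and a cover of the part right of [y]. *)
Lemma cover_length_split (A : R -> Prop) (L y : R) :
  cover_length A L ->
  exists L1 L2, L1 + L2 = L /\
    cover_length (fun u => A u /\ u < y) L1 /\ cover_length (fun u => A u /\ y <= u) L2.
Proof.
  intros (l & r & Hlr & Hs & Hc).
  set (m := fun n => Rmax (l n) (Rmin (r n) y)).
  assert (Hm : forall n, l n <= m n <= r n /\ (m n < y -> m n = r n) /\ (y < m n -> m n = l n)).
  { intro n; unfold m; specialize (Hlr n); unfold Rmax, Rmin; repeat destruct Rle_dec; lra. }
  assert (HsumL : forall n, sum_f_R0 (fun k => r k - l k) n <= L).
  { intro n; apply sum_incr; [exact Hs|intro k; specialize (Hlr k); lra]. }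
  assert (Hsum : forall n, sum_f_R0 (fun k => r k - l k) n
                      = sum_f_R0 (fun k => m k - l k) n + sum_f_R0 (fun k => r k - m k) n).
  { intro n; rewrite <- sum_plus; apply sum_eq; intros; ring. }
  assert (Hp1 : forall k, 0 <= m k - l k) by (intro k; specialize (Hm k); lra).
  assert (Hp2 : forall k, 0 <= r k - m k) by (intro k; specialize (Hm k); lra).
  destruct (nonneg_series_bounded (fun k => m k - l k) L Hp1) as [L1 [H1 _]].
  { intro n; specialize (Hsum n); pose proof (cond_pos_sum _ n Hp2); specialize (HsumL n); lra. }
  destruct (nonneg_series_bounded (fun k => r k - m k) L Hp2) as [L2 [H2 _]].
  { intro n; specialize (Hsum n); pose proof (cond_pos_sum _ n Hp1); specialize (HsumL n); lra. }
  exists L1, L2; split; [|split].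
  - apply UL_sequence with (fun n => sum_f_R0 (fun k => r k - l k) n); [|exact Hs].
    replace (fun n => sum_f_R0 (fun k => r k - l k) n)
      with (fun n => sum_f_R0 (fun k => m k - l k) n + sum_f_R0 (fun k => r k - m k) n)
      by (apply functional_extensionality; intro n; symmetry; apply Hsum).
    apply CV_plus; assumption.
  - exists l, m; split; [intro n; apply Hm|split; [exact H1|]].
    intros u [Hu Huy]; destruct (Hc u Hu) as [n Hn]; exists n; specialize (Hm n); lra.
  - exists m, r; split; [intro n; apply Hm|split; [exact H2|]].
    intros u [Hu Hyu]; destruct (Hc u Hu) as [n Hn]; exists n; specialize (Hm n); lra.
Qed.

Definition interleave (f g : nat -> R) (k : nat) : R :=
  if Nat.even k then f (Nat.div2 k) else g (Nat.div2 k).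

Lemma interleave_even (f g : nat -> R) (n : nat) : interleave f g (2 * n) = f n.
Proof. unfold interleave; rewrite Nat.even_mul, Nat.div2_double; reflexivity. Qed.

Lemma interleave_odd (f g : nat -> R) (n : nat) : interleave f g (S (2 * n)) = g n.
Proof. unfold interleave; rewrite Nat.even_succ, Nat.odd_mul, Nat.div2_succ_double; reflexivity. Qed.

Lemma sum_interleave (f g : nat -> R) (n : nat) :
  sum_f_R0 (interleave f g) (S (2 * n)) = sum_f_R0 f n + sum_f_R0 g n.
Proof.
  induction n as [|n IH].
  - simpl; unfold interleave; simpl; ring.
  - replace (S (2 * S n)) with (S (S (S (2 * n)))) by lia.
    rewrite tech5, tech5, IH, !tech5.
    replace (S (S (2 * n))) with (2 * S n)%nat by lia.
    rewrite interleave_even, interleave_odd; ring.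
Qed.

(** Interleaving two covers gives a cover of the union, of total length at
    most the sum of the two lengths. *)
Lemma cover_length_union (A B : R -> Prop) (L1 L2 : R) :
  cover_length A L1 -> cover_length B L2 ->
  exists L, L <= L1 + L2 /\ cover_length (fun u => A u \/ B u) L.
Proof.
  intros (l1 & r1 & Hlr1 & Hs1 & Hc1) (l2 & r2 & Hlr2 & Hs2 & Hc2).
  set (l := interleave l1 l2); set (r := interleave r1 r2).
  assert (Hlr : forall n, l n <= r n).
  { intro n; unfold l, r, interleave; destruct (Nat.even n); auto. }
  assert (Hterm : forall n, r n - l n
                       = interleave (fun k => r1 k - l1 k) (fun k => r2 k - l2 k) n).
  { intro n; unfold l, r, interleave; destruct (Nat.even n); reflexivity. }
  assert (Hp1 : forall k, 0 <= r1 k - l1 k) by (intro k; specialize (Hlr1 k); lra).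
  assert (Hp2 : forall k, 0 <= r2 k - l2 k) by (intro k; specialize (Hlr2 k); lra).
  assert (Hp : forall k, 0 <= r k - l k) by (intro k; specialize (Hlr k); lra).
  destruct (nonneg_series_bounded (fun n => r n - l n) (L1 + L2) Hp) as [L [HL HLle]].
  { intro n; apply Rle_trans with (sum_f_R0 (fun n => r n - l n) (S (2 * n))).
    - apply tech9; [intro k; simpl; specialize (Hp (S k)); lra|lia].
    - rewrite (sum_eq _ _ _ (fun i _ => Hterm i)), sum_interleave.
      pose proof (sum_incr _ n L1 Hs1 Hp1); pose proof (sum_incr _ n L2 Hs2 Hp2); lra. }
  exists L; split; [exact HLle|]; exists l, r; split; [exact Hlr|split; [exact HL|]].
  intros u [Hu|Hu].
  - destruct (Hc1 u Hu) as [n Hn]; exists (2 * n)%nat; unfold l, r; rewrite !interleave_even; exact Hn.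
  - destruct (Hc2 u Hu) as [n Hn]; exists (S (2 * n)); unfold l, r; rewrite !interleave_odd; exact Hn.
Qed.

(** Whenever [A] has some cover, [leb_measure A] really is the infimum of
    the lengths of its covers (the choice in its definition succeeds). *)
Lemma leb_measure_is_glb (A : R -> Prop) :
  (exists L, cover_length A L) -> Defs.is_glb (cover_length A) (leb_measure A).
Proof.
  intros [L0 HL0]; unfold leb_measure; apply epsilon_spec.
  destruct (completeness (fun y => cover_length A (- y))) as [m [Hub Hlub]].
  - exists 0; intros y Hy; apply cover_length_nonneg in Hy; lra.
  - exists (- L0); rewrite Ropp_involutive; exact HL0.
  - exists (- m); split.
    + intros y Hy; assert (- y <= m) by (apply Hub; rewrite Ropp_involutive; exact Hy); lra.
    + intros m' Hm'; assert (m <= - m'); [|lra].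
      apply Hlub; intros y Hy; specialize (Hm' _ Hy); lra.
Qed.

Lemma window_covered (P : R -> Prop) (x y : R) :
  exists L, cover_length (fun u => x <= u < y /\ P u) L.
Proof.
  exists (Rmax x y - x); apply cover_length_interval; [apply Rmax_l|].
  intros u [[H1 H2] _]; split; [lra|]; apply Rlt_le_trans with y; [lra|apply Rmax_r].
Qed.

Lemma meas_on_le_cover (P : R -> Prop) (x y L : R) :
  cover_length (fun u => x <= u < y /\ P u) L -> meas_on P x y <= L.
Proof. intros H; apply (leb_measure_is_glb _ (window_covered P x y)); exact H. Qed.

Lemma meas_on_ge (P : R -> Prop) (x y M : R) :
  (forall L, cover_length (fun u => x <= u < y /\ P u) L -> M <= L) -> M <= meas_on P x y.
Proof. intros H; apply (leb_measure_is_glb _ (window_covered P x y)); exact H. Qed.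

Lemma meas_on_approx (P : R -> Prop) (x y eps : R) : 0 < eps ->
  exists L, cover_length (fun u => x <= u < y /\ P u) L /\ L < meas_on P x y + eps.
Proof.
  intros He; apply NNPP; intro Hn.
  assert (meas_on P x y + eps <= meas_on P x y); [|lra].
  apply meas_on_ge; intros L HL; apply Rnot_lt_le; intro Hlt; apply Hn; eauto.
Qed.

Lemma meas_on_nonneg (P : R -> Prop) (x y : R) : 0 <= meas_on P x y.
Proof. apply meas_on_ge, cover_length_nonneg. Qed.

Lemma meas_on_void (P : R -> Prop) (x y : R) :
  (forall u, x <= u < y -> ~ P u) -> meas_on P x y = 0.
Proof.
  intros H; apply Rle_antisym; [|apply meas_on_nonneg].
  replace 0 with (x - x) by ring; apply meas_on_le_cover, cover_length_interval; [lra|].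
  intros u [Hu HP]; exfalso; exact (H u Hu HP).
Qed.

Lemma leb_measure_translate (A : R -> Prop) (h : R) :
  leb_measure (fun u => A (u - h)) = leb_measure A.
Proof.
  assert (E : cover_length (fun u => A (u - h)) = cover_length A).
  { apply functional_extensionality; intro L; apply propositional_extensionality; split.
    - intro H; apply cover_length_translate with (h := - h) in H.
      replace (fun u => A (u - - h - h)) with A in H; [exact H|].
      apply functional_extensionality; intro u; f_equal; ring.
    - apply cover_length_translate. }
  unfold leb_measure; rewrite E; reflexivity.
Qed.

Lemma meas_on_translate (P : R -> Prop) (x y h : R) :
  (forall u, x <= u < y -> (P u <-> P (u + h))) ->
  meas_on P (x + h) (y + h) = meas_on P x y.
Proof.
  intros H; unfold meas_on; rewrite <- (leb_measure_translate (fun u => x <= u < y /\ P u) h).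
  f_equal; apply functional_extensionality; intro u; apply propositional_extensionality.
  specialize (H (u - h)); replace (u - h + h) with u in H by ring.
  split; intros [Hu HP].
  - split; [lra|apply H; [lra|exact HP]].
  - split; [lra|apply H; [lra|exact HP]].
Qed.

(** Additivity over adjacent windows: the superadditive half cuts covers,
    the subadditive half glues near-optimal covers. *)
Lemma meas_on_superadditive (P : R -> Prop) (x y z : R) :
  x <= y -> y <= z -> meas_on P x y + meas_on P y z <= meas_on P x z.
Proof.
  intros Hxy Hyz; apply meas_on_ge; intros L HL.
  destruct (cover_length_split _ L y HL) as (L1 & L2 & <- & H1 & H2).
  apply Rplus_le_compat; apply meas_on_le_cover.
  - revert H1; apply cover_length_mono; intros u [Hu HP]; repeat split; tauto || lra.
  - revert H2; apply cover_length_mono; intros u [Hu HP]; repeat split; tauto || lra.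
Qed.

Lemma meas_on_subadditive (P : R -> Prop) (x y z : R) :
  meas_on P x z <= meas_on P x y + meas_on P y z.
Proof.
  apply Rle_plus_epsilon; intros eps He.
  destruct (meas_on_approx P x y (eps / 2)) as [L1 [H1 E1]]; [lra|].
  destruct (meas_on_approx P y z (eps / 2)) as [L2 [H2 E2]]; [lra|].
  destruct (cover_length_union _ _ _ _ H1 H2) as [L [HL HcL]].
  assert (meas_on P x z <= L); [|lra].
  apply meas_on_le_cover; revert HcL; apply cover_length_mono.
  intros u [Hu HP]; destruct (Rlt_le_dec u y); [left|right]; repeat split; tauto || lra.
Qed.

Lemma meas_on_additive (P : R -> Prop) (x y z : R) :
  x <= y -> y <= z -> meas_on P x z = meas_on P x y + meas_on P y z.
Proof.
  intros; apply Rle_antisym; [apply meas_on_subadditive|apply meas_on_superadditive]; assumption.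
Qed.

Lemma chi0c_one_iff (c y : R) : chi0c c y = 1 <-> 0 <= y < c.
Proof. unfold chi0c; destruct (Rle_dec 0 y), (Rlt_dec y c); split; intros; lra. Qed.

(** Re-indexing a solution: if column [k1] of a solution [x] of
    [M(t) x = 1] is selected, the shifted vector solves [M(t + b k1) x' = 1]. *)
Lemma S_of_selected_column (a b c t : R) (x : Z -> bool) (k1 : Z) :
  Mx_eq_1 a b c t x -> x k1 = true -> S_abc a b c (t + b * IZR k1).
Proof.
  intros H Hk; exists (fun k => x (k + k1)%Z); split; [exact Hk|].
  intro m; destruct (H m) as [k0 [[Hx Hc] Hu]]; exists (k0 - k1)%Z; split.
  - rewrite Z.sub_add; split; [exact Hx|].
    replace (t + b * IZR k1 - a * IZR m + b * IZR (k0 - k1)) with (t - a * IZR m + b * IZR k0)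
      by (rewrite minus_IZR; ring); exact Hc.
  - intros k' [Hx' Hc']; assert (k0 = k' + k1)%Z; [|lia].
    apply Hu; split; [exact Hx'|].
    replace (t - a * IZR m + b * IZR (k' + k1)) with (t + b * IZR k1 - a * IZR m + b * IZR k')
      by (rewrite plus_IZR; ring); exact Hc'.
Qed.

(** Shifting [t] by [a j] only re-indexes the rows. *)
Lemma S_shift_rows (a b c t : R) (j : Z) : S_abc a b c t -> S_abc a b c (t + a * IZR j).
Proof.
  intros [x [H0 H]]; exists x; split; [exact H0|]; intro m.
  destruct (H (m - j)%Z) as [k0 [[Hx Hc] Hu]]; exists k0; split.
  - split; [exact Hx|].
    replace (t + a * IZR j - a * IZR m + b * IZR k0) with (t - a * IZR (m - j) + b * IZR k0)
      by (rewrite minus_IZR; ring); exact Hc.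
  - intros k' [Hx' Hc']; apply Hu; split; [exact Hx'|].
    replace (t - a * IZR (m - j) + b * IZR k') with (t + a * IZR j - a * IZR m + b * IZR k')
      by (rewrite minus_IZR; ring); exact Hc'.
Qed.

Lemma S_periodic (a b c t : R) (j : Z) : S_abc a b c (t + a * IZR j) <-> S_abc a b c t.
Proof.
  split; [|apply S_shift_rows].
  intro H; apply S_shift_rows with (j := (- j)%Z) in H; rewrite opp_IZR in H.
  replace (t + a * IZR j + a * - IZR j) with t in H by ring; exact H.
Qed.

Lemma Int_part_unique (y : R) (z : Z) : IZR z <= y < IZR z + 1 -> Int_part y = z.
Proof.
  intros [H1 H2]; unfold Int_part.
  rewrite <- (tech_up y (z + 1)); [lia|rewrite plus_IZR; lra|rewrite plus_IZR; lra].
Qed.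

Lemma mod_a_decomp (a t : R) : t = mod_a a t + a * IZR (Int_part (t / a)).
Proof. unfold mod_a, floorR; ring. Qed.

Lemma mod_a_range (a t : R) : 0 < a -> 0 <= mod_a a t < a.
Proof.
  intros Ha; unfold mod_a, floorR; destruct (base_Int_part (t / a)) as [H1 H2].
  assert (E : t / a * a = t) by (field; lra).
  set (q := t / a) in *; set (z := IZR (Int_part q)) in *; split; nra.
Qed.

Lemma mod_a_window (a w : R) (z : Z) :
  0 < a -> a * IZR z <= w < a * IZR z + a -> mod_a a w = w - a * IZR z.
Proof.
  intros Ha [H1 H2]; unfold mod_a, floorR.
  replace (Int_part (w / a)) with z; [ring|]; symmetry; apply Int_part_unique.
  assert (E : w / a * a = w) by (field; lra).
  set (q := w / a) in *; set (Z0 := IZR z) in *; split; nra.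
Qed.

Section Dynamics.
Variables a b c : R.
Hypothesis Ha : 0 < a.
Hypothesis Hab : a < b.
Hypothesis Hbc : b < c.
Hypothesis Hc0_lo : b - a < c0_of b c.
Hypothesis Hc0_hi : c0_of b c < a.

Lemma next_selected_column (t : R) (x : Z -> bool) :
  Mx_eq_1 a b c t x -> x 0%Z = true ->
  exists k1, x k1 = true /\ c - mod_a a t <= b * IZR k1 < c - mod_a a t + a.
Proof.
  intros H H0; pose proof (mod_a_range a t Ha) as Hr.
  pose proof (mod_a_decomp a t) as Et; set (K := Int_part (t / a)) in Et.
  set (r := mod_a a t) in *.
  destruct (H K) as [k0 [_ Hu]].
  destruct (H (K + 1)%Z) as [k1 [[Hx1 Hc1] _]].
  apply chi0c_one_iff in Hc1; rewrite plus_IZR in Hc1.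
  exists k1; split; [exact Hx1|].
  destruct (Rlt_le_dec (t - a * IZR K + b * IZR k1) c) as [Hlt|Hge]; [|split; lra].
  (* otherwise [k1] would also be selected in row [K], where [0] is selected *)
  exfalso.
  assert (E1 : k0 = k1) by (apply Hu; split; [exact Hx1|apply chi0c_one_iff; lra]).
  assert (E0 : k0 = 0%Z)
    by (apply Hu; split; [exact H0|apply chi0c_one_iff; simpl; lra]).
  rewrite <- E1, E0 in Hc1; simpl in Hc1; lra.
Qed.

Lemma R_abc_of_jump (t : R) (k1 : Z) :
  c - mod_a a t <= b * IZR k1 < c - mod_a a t + a ->
  R_abc a b c t = t + b * IZR k1 /\ ~ (c0_of b c + a - b <= mod_a a t < c0_of b c).
Proof.
  intros [H1 H2]; pose proof (mod_a_range a t Ha) as [Hr0 Hr1].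
  unfold R_abc; cbv zeta; unfold c0_of, floorR in *.
  set (r := mod_a a t) in *; set (n := Int_part (c / b)) in *.
  set (j := (k1 - n)%Z).
  assert (Hj : IZR k1 = IZR j + IZR n) by (unfold j; rewrite minus_IZR; ring).
  rewrite Hj in *.
  assert (Hj01 : j = 0%Z \/ j = 1%Z).
  { destruct (Z.le_gt_cases j (-1)) as [Hle|Hgt].
    - apply IZR_le in Hle; assert (b * IZR j <= - b) by nra; lra.
    - destruct (Z.le_gt_cases 2 j) as [Hle2|Hlt2]; [|lia].
      apply IZR_le in Hle2; assert (b * IZR j >= 2 * b) by nra; lra. }
  destruct Hj01 as [-> | ->]; simpl in *.
  - destruct (Rlt_dec r (c - IZR n * b + a - b)); [lra|].
    destruct (Rlt_dec r (c - IZR n * b)); [lra|split; [ring|lra]].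
  - destruct (Rlt_dec r (c - IZR n * b + a - b)); [split; [ring|lra]|lra].
Qed.

Lemma R_abc_preserves_S (t : R) : S_abc a b c t ->
  S_abc a b c (R_abc a b c t) /\ ~ (c0_of b c + a - b <= mod_a a t < c0_of b c).
Proof.
  intros [x [H0 H]]; destruct (next_selected_column t x H H0) as [k1 [Hx Hk]].
  destruct (R_abc_of_jump t k1 Hk) as [HR Hh]; split; [|exact Hh].
  rewrite HR; exact (S_of_selected_column a b c t x k1 H Hx).
Qed.

(** [R_abc] maps [S_abc] onto itself: for [v] in [S_abc], the column selected
    in the row containing [v - c] gives a preimage. *)
Lemma R_abc_onto_S (v : R) : S_abc a b c v -> exists w, S_abc a b c w /\ R_abc a b c w = v.
Proof.
  intros [x [H0 H]].
  set (f := Int_part ((v - c) / a)).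
  assert (Hf : a * IZR f <= v - c < a * IZR f + a).
  { destruct (base_Int_part ((v - c) / a)) as [H1 H2]; fold f in H1, H2.
    assert (E : (v - c) / a * a = v - c) by (field; lra).
    set (q := (v - c) / a) in *; set (z := IZR f) in *; split; nra. }
  destruct (H f) as [k [[Hx Hc] _]]; apply chi0c_one_iff in Hc.
  set (w := v + b * IZR k).
  destruct (H (f + 1)%Z) as [k' [_ Hu']].
  (* [w] lies in the period window of [v - c]: otherwise [k] and [0] would
     both be selected in row [f + 1] *)
  assert (Hw : a * IZR f <= w < a * IZR f + a).
  { split; [unfold w; lra|].
    destruct (Rlt_le_dec w (a * IZR f + a)) as [Hl|Hl]; [exact Hl|exfalso].
    assert (E1 : k' = k) by (apply Hu'; split; [exact Hx|apply chi0c_one_iff;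
      rewrite plus_IZR; unfold w in Hl; lra]).
    assert (E2 : k' = 0%Z) by (apply Hu'; split; [exact H0|apply chi0c_one_iff;
      rewrite plus_IZR; change (IZR 0) with 0; lra]).
    rewrite E1 in E2; rewrite E2 in Hc; change (IZR 0) with 0 in Hc; lra. }
  exists w; split; [exact (S_of_selected_column a b c v x k H Hx)|].
  destruct (R_abc_of_jump w (- k)) as [HR _].
  - rewrite (mod_a_window a w f Ha Hw), opp_IZR; unfold w; split; lra.
  - rewrite HR; unfold w; rewrite opp_IZR; ring.
Qed.

End Dynamics.

Section HolesRemoval.
Variables a b c : R.
Hypothesis Ha : 0 < a.

Lemma Y_zero : Y_abc a b c 0 = 0.
Proof. unfold Y_abc, sgn; destruct (Rlt_dec 0 0); [lra|destruct (Rlt_dec 0 0); [lra|ring]]. Qed.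

Lemma Y_nonneg_arg (t : R) : 0 <= t -> Y_abc a b c t = meas_on (S_abc a b c) 0 t.
Proof.
  intros Ht; unfold Y_abc, sgn, meas_on; destruct (Rlt_dec 0 t) as [Hp|Hp].
  - rewrite Rmin_left, Rmax_right by lra; ring.
  - replace t with 0 by lra; destruct (Rlt_dec 0 0); [lra|]; rewrite Rmult_0_l.
    symmetry; apply (meas_on_void _ 0 0); intros; lra.
Qed.

Lemma Y_neg_arg (t : R) : t < 0 -> Y_abc a b c t = - meas_on (S_abc a b c) t 0.
Proof.
  intros Ht; unfold Y_abc, sgn, meas_on.
  destruct (Rlt_dec 0 t); [lra|]; destruct (Rlt_dec t 0); [|lra].
  rewrite Rmin_right, Rmax_left by lra; ring.
Qed.

Lemma Y_increment (x y : R) : x <= y -> Y_abc a b c y - Y_abc a b c x = meas_on (S_abc a b c) x y.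
Proof.
  intros Hxy; destruct (Rle_dec 0 x) as [Hx|Hx].
  - rewrite !Y_nonneg_arg by lra; rewrite (meas_on_additive _ 0 x y) by lra; ring.
  - destruct (Rle_dec 0 y) as [Hy|Hy].
    + rewrite Y_nonneg_arg, Y_neg_arg by lra; rewrite (meas_on_additive _ x 0 y) by lra; ring.
    + rewrite !Y_neg_arg by lra; rewrite (meas_on_additive _ x y 0) by lra; ring.
Qed.

Lemma Y_translate_window (x y h : R) : x <= y ->
  (forall u, x <= u < y -> (S_abc a b c u <-> S_abc a b c (u + h))) ->
  Y_abc a b c (y + h) - Y_abc a b c (x + h) = Y_abc a b c y - Y_abc a b c x.
Proof.
  intros Hxy HS; rewrite !Y_increment by lra; apply meas_on_translate; exact HS.
Qed.

Lemma meas_on_periodic (x y : R) (j : Z) :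
  meas_on (S_abc a b c) (x + a * IZR j) (y + a * IZR j) = meas_on (S_abc a b c) x y.
Proof. apply meas_on_translate; intros u _; symmetry; apply S_periodic. Qed.

Lemma meas_on_period_window (x : R) : meas_on (S_abc a b c) x (x + a) = Y_abc a b c a.
Proof.
  pose proof (mod_a_range a x Ha) as Hr; rewrite (mod_a_decomp a x).
  set (r := mod_a a x) in *; set (K := Int_part (x / a)).
  replace (r + a * IZR K + a) with ((r + a) + a * IZR K) by ring.
  rewrite meas_on_periodic, (meas_on_additive _ r a (r + a)) by lra.
  replace (meas_on (S_abc a b c) a (r + a)) with (meas_on (S_abc a b c) (0 + a * IZR 1) (r + a * IZR 1))
    by (f_equal; simpl; ring).
  rewrite meas_on_periodic, Y_nonneg_arg, (meas_on_additive _ 0 r a) by lra; ring.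
Qed.

Lemma Y_add_period (x : R) : Y_abc a b c (x + a) = Y_abc a b c x + Y_abc a b c a.
Proof.
  pose proof (Y_increment x (x + a)) as D; rewrite meas_on_period_window in D; lra.
Qed.

Lemma Y_add_periods (x : R) (j : Z) :
  Y_abc a b c (x + a * IZR j) = Y_abc a b c x + IZR j * Y_abc a b c a.
Proof.
  revert x; induction j as [|j IH|j IH] using Z.peano_ind; intro x.
  - change (IZR 0) with 0; rewrite Rmult_0_r, Rplus_0_r; ring.
  - rewrite succ_IZR; replace (x + a * (IZR j + 1)) with ((x + a) + a * IZR j) by ring.
    rewrite IH, Y_add_period; ring.
  - rewrite <- Z.sub_1_r, minus_IZR; pose proof (IH (x - a)) as E; pose proof (Y_add_period (x - a)) as P.
    replace (x - a + a * IZR j) with (x + a * (IZR j - 1)) in E by ring.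
    replace (x - a + a) with x in P by ring; lra.
Qed.

End HolesRemoval.

Section Increment.
Variables a b c : R.
Hypothesis Ha : 0 < a.
Hypothesis Hab : a < b.
Hypothesis Hbc : b < c.
Hypothesis Hc0_lo : b - a < c0_of b c.
Hypothesis Hc0_hi : c0_of b c < a.

Let c0 := c0_of b c.
Let c1 := c1_of a b c.
Let n := floorR (c / b).
Let N := Int_part ((c - c0) / a).

Lemma jump_decomp : n * b = c1 + a * IZR N.
Proof. unfold c1, c1_of, N, n, c0, c0_of, floorR; ring. Qed.

Lemma R_abc_low (t : R) : mod_a a t < c0 + a - b -> R_abc a b c t = t + n * b + b.
Proof.
  intros H; unfold R_abc; cbv zeta; fold c0.
  destruct (Rlt_dec (mod_a a t) (c0 + a - b)); [reflexivity|lra].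
Qed.

Lemma R_abc_high (t : R) : c0 <= mod_a a t -> R_abc a b c t = t + n * b.
Proof.
  intros H; unfold R_abc; cbv zeta; fold c0.
  destruct (Rlt_dec (mod_a a t) (c0 + a - b)); [unfold c0 in *; lra|].
  destruct (Rlt_dec (mod_a a t) c0); [lra|reflexivity].
Qed.

Lemma R_abc_cases (w : R) : S_abc a b c w ->
  (mod_a a w < c0 + a - b /\ R_abc a b c w = w + n * b + b) \/
  (c0 <= mod_a a w /\ R_abc a b c w = w + n * b).
Proof.
  intros Hw; destruct (R_abc_preserves_S a b c Ha Hab Hbc Hc0_lo Hc0_hi w Hw) as [_ Hhole].
  fold c0 in Hhole; destruct (Rlt_dec (mod_a a w) (c0 + a - b)) as [H|H].
  - left; split; [exact H|apply R_abc_low, H].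
  - right; assert (Hhi : c0 <= mod_a a w) by lra; split; [exact Hhi|apply R_abc_high, Hhi].
Qed.

Lemma S_iff_R_image (u s : R) : R_abc a b c u = u + s ->
  (forall w, S_abc a b c w -> R_abc a b c w = u + s -> w = u) ->
  (S_abc a b c u <-> S_abc a b c (u + s)).
Proof.
  intros HRu Huniq; split.
  - intros Su; rewrite <- HRu; exact (proj1 (R_abc_preserves_S a b c Ha Hab Hbc Hc0_lo Hc0_hi u Su)).
  - intros Sv; destruct (R_abc_onto_S a b c Ha Hab Hbc Hc0_lo Hc0_hi _ Sv) as [w [Sw Rw]].
    rewrite <- (Huniq w Sw Rw); exact Sw.
Qed.

Lemma S_translate_low (u : R) : 0 <= u < c0 + a - b -> (S_abc a b c u <-> S_abc a b c (u + c1 + b)).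
Proof.
  intros Hu; pose proof jump_decomp as Hn.
  assert (Hm : mod_a a u = u)
    by (rewrite (mod_a_window a u 0 Ha); simpl; [ring|unfold c0 in *; lra]).
  rewrite <- (S_periodic a b c (u + c1 + b) N).
  replace (u + c1 + b + a * IZR N) with (u + (n * b + b)) by lra.
  apply S_iff_R_image; [rewrite R_abc_low by lra; ring|].
  intros w Sw Rw; destruct (R_abc_cases w Sw) as [[H1 H2]|[H1 H2]]; [lra|exfalso].
  (* the high branch would need [w = u + b], whose residue [u + b - a] is in the hole *)
  assert (Ew : w = u + b) by lra; rewrite Ew in H1.
  rewrite (mod_a_window a (u + b) 1 Ha) in H1; simpl in *; unfold c0 in *; lra.
Qed.

Lemma S_translate_high (u : R) : c0 <= u < a -> (S_abc a b c u <-> S_abc a b c (u + c1)).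
Proof.
  intros Hu; pose proof jump_decomp as Hn.
  assert (Hm : mod_a a u = u)
    by (rewrite (mod_a_window a u 0 Ha); simpl; [ring|unfold c0 in *; lra]).
  rewrite <- (S_periodic a b c (u + c1) N).
  replace (u + c1 + a * IZR N) with (u + n * b) by lra.
  apply S_iff_R_image; [rewrite R_abc_high by lra; ring|].
  intros w Sw Rw; destruct (R_abc_cases w Sw) as [[H1 H2]|[H1 H2]]; [exfalso|lra].
  (* the low branch would need [w = u - b], whose residue [u - b + a] is too large *)
  assert (Ew : w = u - b) by lra; rewrite Ew in H1.
  rewrite (mod_a_window a (u - b) (-1) Ha) in H1; simpl in *; unfold c0 in *; lra.
Qed.

(** [[c1, c1 + b - a)] is a gap of [S_abc]: it is not in the image of [R_abc]. *)
Lemma S_gap (u : R) : c1 <= u < c1 + b - a -> ~ S_abc a b c u.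
Proof.
  intros Hu Su; pose proof jump_decomp as Hn.
  destruct (R_abc_onto_S a b c Ha Hab Hbc Hc0_lo Hc0_hi _ Su) as [w [Sw Rw]].
  pose proof (mod_a_range a w Ha) as Hr.
  pose proof (mod_a_decomp a w) as Ew; set (K := Int_part (w / a)) in Ew.
  set (r := mod_a a w) in *.
  (* [u - c1 - r] would be a multiple of [a] strictly between two consecutive ones *)
  destruct (R_abc_cases w Sw) as [[H1 H2]|[H1 H2]]; fold r in H1.
  - assert (Ej : a * IZR (K + N) = u - c1 - b - r) by (rewrite plus_IZR; lra).
    assert (-2 < IZR (K + N) < -1) as [L1 L2] by (unfold c0 in *; split; nra).
    apply lt_IZR in L1; apply lt_IZR in L2; lia.
  - assert (Ej : a * IZR (K + N) = u - c1 - r) by (rewrite plus_IZR; lra).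
    assert (-1 < IZR (K + N) < 0) as [L1 L2] by (unfold c0 in *; split; nra).
    apply lt_IZR in L1; apply lt_IZR in L2; lia.
Qed.

Lemma Y_R_reduce (t d : R) : R_abc a b c t = t + n * b + d ->
  Y_abc a b c (R_abc a b c t) - Y_abc a b c t
  = Y_abc a b c (mod_a a t + c1 + d) - Y_abc a b c (mod_a a t) + IZR N * Y_abc a b c a.
Proof.
  intros HR; pose proof jump_decomp as Hn.
  pose proof (mod_a_decomp a t) as Et; set (K := Int_part (t / a)) in Et.
  set (r := mod_a a t) in *.
  rewrite HR; replace (t + n * b + d) with ((r + c1 + d) + a * IZR (K + N))
    by (rewrite plus_IZR; lra).
  rewrite Et at 1; rewrite !Y_add_periods, plus_IZR by exact Ha; ring.
Qed.

(** Low branch: the window [[0, r)] is translated by [c1 + b]. *)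
Lemma Y_R_increment_low (t : R) : mod_a a t < c0 + a - b ->
  Y_abc a b c (R_abc a b c t) - Y_abc a b c t
  = Y_abc a b c (c1 + b - a) + IZR (N + 1) * Y_abc a b c a.
Proof.
  intros Hlow; pose proof (mod_a_range a t Ha) as Hr.
  rewrite (Y_R_reduce t b) by (apply R_abc_low, Hlow).
  set (r := mod_a a t) in *.
  pose proof (Y_translate_window a b c 0 r (c1 + b)) as W.
  assert (Hwin : forall u, 0 <= u < r -> (S_abc a b c u <-> S_abc a b c (u + (c1 + b)))).
  { intros u Hu; replace (u + (c1 + b)) with (u + c1 + b) by ring; apply S_translate_low; lra. }
  specialize (W ltac:(lra) Hwin); rewrite Rplus_0_l, Y_zero in W.
  pose proof (Y_add_period a b c Ha (c1 + b - a)) as P.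
  replace (c1 + b - a + a) with (c1 + b) in P by ring.
  replace (r + c1 + b) with (r + (c1 + b)) by ring.
  rewrite plus_IZR; change (IZR 1) with 1; lra.
Qed.

(** High branch: the window [[r, a)] is translated by [c1], and [Y] is
    constant across the gap [[c1, c1 + b - a)]. *)
Lemma Y_R_increment_high (t : R) : c0 <= mod_a a t ->
  Y_abc a b c (R_abc a b c t) - Y_abc a b c t
  = Y_abc a b c (c1 + b - a) + IZR N * Y_abc a b c a.
Proof.
  intros Hhigh; pose proof (mod_a_range a t Ha) as Hr.
  rewrite (Y_R_reduce t 0) by (rewrite Rplus_0_r; apply R_abc_high, Hhigh).
  set (r := mod_a a t) in *; rewrite Rplus_0_r.
  pose proof (Y_translate_window a b c r a c1) as W.
  assert (Hwin : forall u, r <= u < a -> (S_abc a b c u <-> S_abc a b c (u + c1)))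
    by (intros u Hu; apply S_translate_high; lra).
  specialize (W ltac:(lra) Hwin).
  pose proof (Y_add_period a b c Ha c1) as P.
  assert (Gap : Y_abc a b c (c1 + b - a) - Y_abc a b c c1 = 0).
  { rewrite Y_increment by lra; apply meas_on_void; intros u Hu; apply S_gap; lra. }
  replace (a + c1) with (c1 + a) in W by ring; lra.
Qed.

Lemma Y_R_increment (t : R) : S_abc a b c t ->
  exists k : Z, Y_abc a b c (R_abc a b c t) - Y_abc a b c t - Y_abc a b c (c1 + b - a)
               = IZR k * Y_abc a b c a.
Proof.
  intros St; destruct (R_abc_cases t St) as [[Hlow _]|[Hhigh _]].
  - exists (N + 1)%Z; rewrite Y_R_increment_low by exact Hlow; ring.
  - exists N; rewrite Y_R_increment_high by exact Hhigh; ring.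
Qed.

End Increment.

Theorem theorem5p5 (a b c : R) :
  0 < a -> 0 < b -> 0 < c -> a < b -> b < c ->
  2 <= floorR (c / b) ->
  b - a < c0_of b c -> c0_of b c < a ->
  0 <= c1_of a b c -> c1_of a b c <= 2 * a - b ->
  (exists t, S_abc a b c t) ->
  ((~ exists p q : Z, (q <> 0)%Z /\ a / b = IZR p / IZR q) \/
   (exists p q : Z, (0 < p)%Z /\ (0 < q)%Z /\ Z.gcd p q = 1%Z /\
      a / b = IZR p / IZR q /\ exists k : Z, c = IZR k * (b / IZR q))) ->
  forall t, S_abc a b c t ->
    exists k : Z,
      Y_abc a b c (R_abc a b c t) - Y_abc a b c t - Y_abc a b c (c1_of a b c + b - a)
      = IZR k * Y_abc a b c a.
Proof.
  intros Ha _ _ Hab Hbc _ Hc0_lo Hc0_hi _ _ _ _ t St.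
  exact (Y_R_increment a b c Ha Hab Hbc Hc0_lo Hc0_hi t St).
Qed.
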